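(* For $n\ge 1$, there is a one-to-one correspondence between the set of signed permutations $\pi=\pi_1\pi_2\cdots\pi_n$ of $\{0,1,\dots,n-1\}$ with $\pi_n\neq 0$ (that is, $\pi_n$ is not the unbarred $0$) that are representations of signed skew derangements on $[n]$, and the set of derangements of type $B$ on $[n]$.
   Context: A signed permutation on a set $S$ of integers is an arrangement of the elements of $S$ in which some entries carry a bar. A derangement of type $B$ on $[n]$ is a signed permutation $\tau_1\cdots\tau_n$ of $[n]$ with $\tau_i\neq i$ for all $i$ (where $\tau_i=\bar i$ is allowed). A signed set on $[n]$ is $[n]$ with some elements barred; for such $X$, $X-1$ is obtained by subtracting $1$ from each element using $\bar i-1=\overline{i-1}$. A signed skew derangement on $[n]$ is a bijection $f:X\to X-1$, for some signed set $X$ on $[n]$, with $f(x)\ne x$ for all $x\in X$. The representation of a bijection $f:X\to X-1$ is the signed permutation $\pi_1\cdots\pi_n$ of $\{0,\dots,n-1\}$ given by $\pi_i=f(\sigma_i)$, where $\sigma_i$ is the element of $X$ with underlying value $i$; this gives a bijection between all such maps $f$ (over all signed sets $X$) and all signed permutations of $\{0,\dots,n-1\}$. *)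

From mathcomp Require Import all_boot all_fingroup.
Set Implicit Arguments.
Unset Strict Implicit.
Unset Printing Implicit Defensive.

(* A signed element is a pair (underlying value, barred?). *)
Definition selt := (nat * bool)%type.

(* A signed permutation of a set of n consecutive integers, written as a word
   pi_1 ... pi_n: the permutation part gives, for position k+1 (k : 'I_n),
   an index into the set, and the boolean says whether that entry is barred. *)
Definition sperm (n : nat) := ({perm 'I_n} * {ffun 'I_n -> bool})%type.

Definition entry0 n (p : sperm n) (k : 'I_n) : selt := (val (p.1 k), p.2 k).

Definition entry1 n (p : sperm n) (k : 'I_n) : selt := ((val (p.1 k)).+1, p.2 k).

(* Derangement of type B on [n]: tau_i <> i (unbarred i) for all i;
   tau_i = bar i is allowed. *)
Definition derangementB n (t : sperm n) : Prop :=
  forall k : 'I_n, entry1 t k <> ((val k).+1, false).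

(* A signed set X on [n]: X k says whether the element k+1 is barred. *)
Definition sset (n : nat) := {ffun 'I_n -> bool}.

(* sigma_{k+1}: the element of X with underlying value k+1. *)
Definition elX n (X : sset n) (k : 'I_n) : selt := ((val k).+1, X k).

(* The element of X-1 with underlying value k (obtained from (k+1) - 1,
   keeping the bar: bar(i) - 1 = bar(i-1)). *)
Definition elXm1 n (X : sset n) (k : 'I_n) : selt := (val k, X k).

(* Since elX X and elXm1 X enumerate X and X-1 bijectively, a bijection
   f : X -> X-1 is encoded by a permutation f of 'I_n:
   f (elX X k) = elXm1 X (f k). *)

Definition skew_derangement n (X : sset n) (f : {perm 'I_n}) : Prop :=
  forall k : 'I_n, elXm1 X (f k) <> elX X k.

(* Representation of f : X -> X-1: the signed permutation pi of {0..n-1}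
   with pi_i = f(sigma_i). *)
Definition rep n (X : sset n) (f : {perm 'I_n}) : sperm n :=
  (f, [ffun k => X (f k)]).

Lemma entry0_rep n (X : sset n) (f : {perm 'I_n}) (k : 'I_n) :
  entry0 (rep X f) k = elXm1 X (f k).
Proof. by rewrite /entry0 /rep /= ffunE. Qed.

Definition is_rep_ssd n (p : sperm n) : Prop :=
  exists (X : sset n) (f : {perm 'I_n}), skew_derangement X f /\ rep X f = p.

Definition last_not_zero n (p : sperm n) : Prop :=
  forall k : 'I_n, val k = n.-1 -> entry0 p k <> (0, false).

From mathcomp Require Import all_boot all_fingroup.
From Stdlib Require Import ProofIrrelevance.

Set Implicit Arguments.
Unset Strict Implicit.
Unset Printing Implicit Defensive.

(* A representation p = (f, b) determines its signed set X, and both conditions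
   on p say the same thing about the positions k with f k = k + 1 (mod n): there
   X must change its bar between k and k + 1 when k < n - 1, and X 0 must be
   barred when k = n - 1.  Composing f with the cyclic shift k |-> k - 1 turns
   these positions into fixed points, and the "bar changes" of X, which
   determine X, become the bars of a type B derangement. *)

Lemma exists_bijective_sig (T U : Type) (P : T -> Prop) (Q : U -> Prop)
    (h : T -> U) :
  bijective h -> (forall x, P x <-> Q (h x)) ->
  exists g : {x | P x} -> {y | Q y}, bijective g.
Proof.
move=> [h' hK h'K] PQ.
have Qh' y : Q y -> P (h' y) by move=> Qy; apply/PQ; rewrite h'K.
exists (fun x => exist _ (h (sval x)) (proj1 (PQ _) (svalP x))).
exists (fun y => exist _ (h' (sval y)) (Qh' _ (svalP y))).
- by move=> [x Px]; apply: eq_sig_hprop => /= [? ? ?|]; rewrite ?hK //; apply: proof_irrelevance.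
- by move=> [y Qy]; apply: eq_sig_hprop => /= [? ? ?|]; rewrite ?h'K //; apply: proof_irrelevance.
Qed.

Section SkewDerangements.

Variable n : nat.

Lemma val_ordS (k : 'I_n) : val (ordS k) = if val k < n.-1 then (val k).+1 else 0.
Proof.
case: n k => [[]//|m] [k lt_km] /=.
case: ltnP => [lt_k1m | le_mk]; first by rewrite modn_small.
have -> : k = m by apply/eqP; rewrite eqn_leq le_mk andbT -ltnS.
by rewrite modnn.
Qed.

Definition cycle_pred : {perm 'I_n} := perm (@ord_pred_inj n).

Definition rep_sset (p : sperm n) : sset n := [ffun j => p.2 ((p.1^-1)%g j)].

Lemma rep_ssetE (p : sperm n) k : rep_sset p (p.1 k) = p.2 k.
Proof. by rewrite ffunE permK. Qed.

Lemma rep_ssetK (X : sset n) f : rep_sset (rep X f) = X.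
Proof. by apply/ffunP => j; rewrite !ffunE permKV. Qed.

Lemma rep_rep_sset (p : sperm n) : rep (rep_sset p) p.1 = p.
Proof. by case: p => f b; congr pair; apply/ffunP => k; rewrite ffunE rep_ssetE. Qed.

Lemma is_rep_ssdE (p : sperm n) :
  is_rep_ssd p <-> skew_derangement (rep_sset p) p.1.
Proof.
split=> [[X [f [skew_Xf <-]]] | skew_p]; first by rewrite rep_ssetK.
by exists (rep_sset p), p.1; rewrite rep_rep_sset.
Qed.

Lemma skew_derangementE (X : sset n) (f : {perm 'I_n}) :
  skew_derangement X f <->
  forall k, val k < n.-1 -> f k = ordS k -> X (ordS k) != X k.
Proof.
split=> [skew_Xf k lt_kn fk | Xchange k [fk_val fk_bar]].
  by apply/eqP => eqX; apply: (skew_Xf k); rewrite /elXm1 /elX fk val_ordS lt_kn eqX.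
have lt_kn : val k < n.-1 by rewrite ltn_predRL -fk_val.
have fk : f k = ordS k by apply: val_inj; rewrite val_ordS lt_kn.
by move: (Xchange k lt_kn fk); rewrite -fk fk_bar eqxx.
Qed.

Lemma last_not_zeroE (p : sperm n) :
  last_not_zero p <->
  forall k, val k = n.-1 -> p.1 k = ordS k -> rep_sset p (ordS k).
Proof.
split=> [last_p k kE fk | X0 k kE].
  apply/negPn/negP => X0; apply: (last_p k kE).
  by rewrite /entry0 -rep_ssetE fk val_ordS kE ltnn (negbTE X0).
rewrite /entry0 => -[fk_val fk_bar].
have fk : p.1 k = ordS k by apply: val_inj; rewrite val_ordS kE ltnn.
by move: (X0 k kE fk); rewrite -fk rep_ssetE fk_bar.
Qed.

Definition bar_change (X : sset n) : sset n :=
  [ffun k => if val k < n.-1 then X (ordS k) != X k else X (ordS k)].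

Definition shift_points_barred (X : sset n) (f : {perm 'I_n}) : Prop :=
  forall k, f k = ordS k -> bar_change X k.

Lemma rep_ssd_last_not_zeroE (p : sperm n) :
  is_rep_ssd p /\ last_not_zero p <-> shift_points_barred (rep_sset p) p.1.
Proof.
rewrite /shift_points_barred; split.
  case=> /is_rep_ssdE/skew_derangementE Xchange /last_not_zeroE X0 k fk.
  rewrite ffunE; case: ltnP => [lt_kn | le_nk]; first exact: Xchange.
  by apply: X0 => //; apply/eqP; rewrite eqn_leq le_nk -ltnS (leq_trans (ltn_ord k) (leqSpred n)).
move=> barred; split; [apply/is_rep_ssdE/skew_derangementE | apply/last_not_zeroE].
  by move=> k lt_kn /barred; rewrite ffunE lt_kn.
by move=> k kE /barred; rewrite ffunE kE ltnn.
Qed.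

Definition derangement_of (p : sperm n) : sperm n :=
  ((p.1 * cycle_pred)%g, bar_change (rep_sset p)).

Lemma derangement_of_fixE (p : sperm n) k :
  ((derangement_of p).1 k = k) <-> (p.1 k = ordS k).
Proof.
rewrite /= permM permE; split=> [fixk | ->]; last exact: ordSK.
by rewrite -{2}fixk ord_predK.
Qed.

Lemma derangementB_derangement_of (p : sperm n) :
  derangementB (derangement_of p) <-> shift_points_barred (rep_sset p) p.1.
Proof.
split=> [derB k /derangement_of_fixE fixk | barred k [fixk_val fixk_bar]].
  by move: (derB k); rewrite /entry1 fixk; case: (bar_change _ k).
have /derangement_of_fixE fk : (derangement_of p).1 k = k by apply: val_inj.
by move: (barred k fk); rewrite fixk_bar.
Qed.

Lemma bar_change_inj : injective bar_change.
Proof.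
move=> X X' eqXX'; apply/ffunP => j.
have [m] := ubnP (val j); elim: m j => // m IH j lt_jm.
have := congr1 (fun Y : sset n => Y (ord_pred j)) eqXX'.
have := val_ordS (ord_pred j); rewrite !ffunE ord_predK.
case: ifP => // lt_kn jE.
rewrite (IH (ord_pred j)); last by rewrite -ltnS -jE.
by case: (X j) (X' j) (X' (ord_pred j)) => [] [] [].
Qed.

Lemma derangement_of_inj : injective derangement_of.
Proof.
move=> p p' [/mulIg eq_f /bar_change_inj eq_X].
by rewrite -(rep_rep_sset p) -(rep_rep_sset p') eq_f eq_X.
Qed.

End SkewDerangements.

Theorem lemma3 (n : nat) (hn : 1 <= n) :
  exists h : {p : sperm n | is_rep_ssd p /\ last_not_zero p} ->
             {t : sperm n | derangementB t},
    bijective h.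
Proof.
apply: (exists_bijective_sig (Q := @derangementB n) (injF_bij (@derangement_of_inj n))) => p.
exact: iff_trans (rep_ssd_last_not_zeroE p) (iff_sym (derangementB_derangement_of p)).
Qed.
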